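(* Let $S=\{R_0,\dots,R_d\}$ be a scheme on $X$, $\mathbb F$ a field, $x\in X$, $\mathcal T=\mathcal T(x)$, $E_a^*=E_a^*(x)$, and let $\mathrm{Rad}(\mathcal T)$ be the Jacobson radical of $\mathcal T$. Suppose that $E_a^*ME_b^*=O$ for all $M\in\mathrm{Rad}(\mathcal T)$ and all distinct $R_a,R_b\in S$. Then $\mathcal T$ is semisimple if and only if the $\mathbb F$-algebra $E_c^*\mathcal TE_c^*=\{E_c^*ME_c^*:M\in\mathcal T\}$ (with identity $E_c^*$) is semisimple for every $R_c\in S$.
   Context: Let $X$ be a nonempty finite set. A scheme of class $d$ on $X$ is a partition $S=\{R_0,\dots,R_d\}$ of $X\times X$ into nonempty sets such that $R_0=\{(b,b):b\in X\}$; for each $c$ there is $c'$ with $R_{c'}=\{(f,e):(e,f)\in R_c\}$; and for all $i,j,k$ the intersection number $p_{ij}^k=|\{\ell\in X:(m,\ell)\in R_i,(\ell,n)\in R_j\}|$ does not depend on $(m,n)\in R_k$. For $y\in X$, $yR_a=\{z:(y,z)\in R_a\}$. $A_a\in M_X(\mathbb F)$ is the $(0,1)$ adjacency matrix of $R_a$ and $E_a^*(y)$ is the diagonal $(0,1)$-matrix with ones exactly at positions indexed by $yR_a$. The Terwilliger $\mathbb F$-algebra $\mathcal T(y)$ is the $\mathbb F$-subalgebra of $M_X(\mathbb F)$ generated by $A_0,\dots,A_d,E_0^*(y),\dots,E_d^*(y)$. $O$ is the zero matrix. *)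

From mathcomp Require Import all_boot all_order all_algebra.
Set Implicit Arguments. Unset Strict Implicit. Unset Printing Implicit Defensive.
Import GRing.Theory.
Local Open Scope ring_scope.

(* The point set X is 'I_n.+1 (a nonempty finite set, up to relabelling).
   A scheme of class d is given by r : X -> X -> 'I_d.+1, where
   R_a = {(y,z) | r y z = a}. *)
Definition is_scheme (n d : nat) (r : 'I_n.+1 -> 'I_n.+1 -> 'I_d.+1) : Prop :=
  [/\
      (forall a : 'I_d.+1, exists y z, r y z = a),
      (forall y z, r y z = ord0 <-> y = z),
      (forall c : 'I_d.+1, exists c' : 'I_d.+1,
          forall e f, r f e = c' <-> r e f = c)
    & (* intersection numbers well defined *)
      (forall i j k : 'I_d.+1, forall m1 n1 m2 n2,
          r m1 n1 = k -> r m2 n2 = k ->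
          #|[set l | (r m1 l == i) && (r l n1 == j)]|
          = #|[set l | (r m2 l == i) && (r l n2 == j)]|)].

Definition adjmx (F : fieldType) (n d : nat) (r : 'I_n.+1 -> 'I_n.+1 -> 'I_d.+1)
  (a : 'I_d.+1) : 'M[F]_n.+1 :=
  \matrix_(y, z) (r y z == a)%:R.

Definition dualidem (F : fieldType) (n d : nat) (r : 'I_n.+1 -> 'I_n.+1 -> 'I_d.+1)
  (x : 'I_n.+1) (a : 'I_d.+1) : 'M[F]_n.+1 :=
  \matrix_(y, z) ((y == z) && (r x z == a))%:R.

Inductive gen_alg (F : fieldType) (n : nat) (G : 'M[F]_n.+1 -> Prop)
  : 'M[F]_n.+1 -> Prop :=
| ga_gen M : G M -> gen_alg G M
| ga_one : gen_alg G 1%:M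
| ga_add M N : gen_alg G M -> gen_alg G N -> gen_alg G (M + N)
| ga_scale (c : F) M : gen_alg G M -> gen_alg G (c *: M)
| ga_mul M N : gen_alg G M -> gen_alg G N -> gen_alg G (M *m N).

Definition terwilliger (F : fieldType) (n d : nat)
  (r : 'I_n.+1 -> 'I_n.+1 -> 'I_d.+1) (x : 'I_n.+1) : 'M[F]_n.+1 -> Prop :=
  gen_alg (fun M => exists a, M = adjmx F r a \/ M = dualidem F r x a).

Definition jacobson_rad (F : fieldType) (n : nat) (A : 'M[F]_n.+1 -> Prop)
  (u : 'M[F]_n.+1) (M : 'M[F]_n.+1) : Prop :=
  A M /\ forall N, A N -> exists U, A U /\ U *m (u - N *m M) = u.

(* finite-dimensional algebra semisimple  <->  Jacobson radical is zero *)
Definition semisimple_alg (F : fieldType) (n : nat) (A : 'M[F]_n.+1 -> Prop)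
  (u : 'M[F]_n.+1) : Prop :=
  forall M, jacobson_rad A u M -> M = 0.

Definition corner (F : fieldType) (n : nat) (A : 'M[F]_n.+1 -> Prop)
  (e : 'M[F]_n.+1) : 'M[F]_n.+1 -> Prop :=
  fun M => exists N, A N /\ M = e *m N *m e.

Arguments adjmx F {n d} r a.
Arguments dualidem F {n d} r x a.
Arguments terwilliger F {n d} r x _.

From mathcomp Require Import all_boot all_order all_algebra.
Import GRing.Theory.
Set Implicit Arguments. Unset Strict Implicit.
Local Open Scope ring_scope.

(* For an idempotent e of an algebra A, the radical of eAe lies in Rad(A)
   (Jacobson's lemma: 1 - xy is left invertible iff 1 - yx is), and
   e Rad(A) e lies in Rad(eAe).  The first inclusion shows that corners of a
   semisimple algebra are semisimple.  Conversely, if every corner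
   E_c^* T E_c^* is semisimple then E_c^* M E_c^* = 0 for M in Rad(T); the
   hypothesis kills the off-diagonal blocks, and sum_c E_c^* = 1 gives M = 0. *)

Section RingIdentities.
Variable R : pzRingType.

Lemma left_inv_swap (x y w : R) :
  w * (1 - y * x) = 1 -> (1 + x * w * y) * (1 - x * y) = 1.
Proof.
move=> wK; rewrite mulrDl mul1r mulrBr mulr1.
have -> : x * w * y - x * w * y * (x * y) = x * (w * (1 - y * x)) * y.
  by rewrite !(mulrBr, mulrBl, mulr1, mul1r, mulrA).
by rewrite wK mulr1 subrK.
Qed.

Lemma left_inv_from_corner (e b m u : R) :
  e * b = b -> u * (e - b * m) = e -> (1 + m * u * b) * (1 - m * b) = 1.
Proof.
move=> eb uK; rewrite mulrDl mul1r mulrBr mulr1.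
have -> : m * u * b - m * u * b * (m * b) = m * (u * (e - b * m)) * b.
  by rewrite !(mulrBr, mulrBl, mulrA) -[m * u * e * b]mulrA eb.
by rewrite uK -[m * e * b]mulrA eb subrK.
Qed.

Lemma corner_left_inv (e P M V : R) :
  e * e = e -> e * P = P -> P * e = P -> V * (1 - P * M) = 1 ->
  e * V * e * (e - P * (e * M * e)) = e.
Proof.
move=> ee eP Pe VK.
have -> : e - P * (e * M * e) = (1 - P * M) * e.
  by rewrite mulrBl mul1r !mulrA Pe.
have eK : e * ((1 - P * M) * e) = (1 - P * M) * e.
  by rewrite mulrBl mul1r mulrBr ee !mulrA eP.
by rewrite -mulrA eK mulrA -(mulrA e V) VK mulr1 ee.
Qed.

Lemma eq0_from_blocks (I : finType) (E : I -> R) (M : R) :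
  \sum_a E a = 1 -> (forall a b, E a * M * E b = 0) -> M = 0.
Proof.
move=> sumE1 blocks0.
have -> : M = (\sum_a E a) * M * (\sum_b E b) by rewrite sumE1 mul1r mulr1.
rewrite mulr_sumr big1 // => b _.
by rewrite !mulr_suml big1 // => a _.
Qed.

End RingIdentities.

Section CornerRadical.
Variables (F : fieldType) (n : nat) (A : 'M[F]_n.+1 -> Prop).
Hypotheses (A_mul : forall M N, A M -> A N -> A (M *m N))
           (A_add : forall M N, A M -> A N -> A (M + N))
           (A_one : A 1%:M).
Variable e : 'M[F]_n.+1.
Hypotheses (A_e : A e) (e_idem : e *m e = e).

Lemma corner_sub N : A N -> A (e *m N *m e).
Proof. by move=> AN; apply: A_mul => //; apply: A_mul. Qed.

Lemma mul_idem_corner N : e *m (e *m N *m e) = e *m N *m e.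
Proof. by rewrite !mulmxA e_idem. Qed.

Lemma corner_mul_idem N : e *m N *m e *m e = e *m N *m e.
Proof. by rewrite -mulmxA e_idem. Qed.

Lemma corner_rad_sub_rad M :
  jacobson_rad (corner A e) e M -> jacobson_rad A 1%:M M.
Proof.
move=> [[N [AN ->]] radM]; split; first exact: corner_sub.
move=> a Aa.
have [_ [[u0 [Au0 ->]] uK]] := radM (e *m a *m e) (ex_intro _ a (conj Aa erefl)).
have mb : e *m N *m e *m (e *m a *m e) = e *m N *m e *m (a *m e).
  by rewrite !mulmxA corner_mul_idem.
have := left_inv_from_corner (mul_idem_corner a) uK.
set m := e *m N *m e; set b := e *m a *m e; set u := e *m u0 *m e.
have [Am Ab Au] : [/\ A m, A b & A u] by split; apply: corner_sub.
rewrite [m * b]mb => /left_inv_swap.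
rewrite -[a *m e * m]mulmxA mul_idem_corner => inv_am.
exists (1%:M + a *m e *m (1%:M + m *m u *m b) *m m); split=> //.
by do ![apply: A_add | apply: A_mul | apply: A_one | assumption].
Qed.

Lemma rad_corner M :
  jacobson_rad A 1%:M M -> jacobson_rad (corner A e) e (e *m M *m e).
Proof.
move=> [AM radM]; split; first by exists M.
move=> _ [N [AN ->]].
have [V [AV VK]] := radM _ (corner_sub AN).
exists (e *m V *m e); split; first by exists V.
exact: (corner_left_inv e_idem (mul_idem_corner N) (corner_mul_idem N) VK).
Qed.

Lemma semisimple_corner :
  semisimple_alg A 1%:M -> semisimple_alg (corner A e) e.
Proof. by move=> ssA M /corner_rad_sub_rad /ssA. Qed.

End CornerRadical.

Section DualIdempotents.
Variables (F : fieldType) (n d : nat) (r : 'I_n.+1 -> 'I_n.+1 -> 'I_d.+1).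
Variable x : 'I_n.+1.

Lemma dualidem_idem a : dualidem F r x a *m dualidem F r x a = dualidem F r x a.
Proof.
apply/matrixP => i j; rewrite !mxE (bigD1 j) //= !mxE big1 ?addr0.
  by rewrite eqxx; case: (r x j == a); rewrite ?andbF ?andbT ?mulr1 ?mulr0.
by move=> k kj; rewrite !mxE (negbTE kj) mulr0.
Qed.

Lemma sum_dualidem : \sum_a dualidem F r x a = 1.
Proof.
apply/matrixP => i j; rewrite summxE !mxE.
under eq_bigr => a _ do rewrite mxE.
rewrite (bigD1 (r x j)) //= eqxx andbT big1 ?addr0 // => a ra.
by rewrite (eq_sym (r x j)) (negbTE ra) andbF.
Qed.

Lemma terwilliger_dualidem a : terwilliger F r x (dualidem F r x a).
Proof. by apply: ga_gen; exists a; right. Qed.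

End DualIdempotents.

Theorem proposition5p11 (F : fieldType) (n d : nat)
  (r : 'I_n.+1 -> 'I_n.+1 -> 'I_d.+1) (x : 'I_n.+1) :
  is_scheme r ->
  (forall M, jacobson_rad (terwilliger F r x) 1%:M M ->
     forall a b : 'I_d.+1, a != b ->
       dualidem F r x a *m M *m dualidem F r x b = 0) ->
  (semisimple_alg (terwilliger F r x) 1%:M <->
   forall c : 'I_d.+1,
     semisimple_alg (corner (terwilliger F r x) (dualidem F r x c))
                    (dualidem F r x c)).
Proof.
move=> _ offdiag0.
have T_e := terwilliger_dualidem F r x; have e_idem := dualidem_idem F r x.
split=> [ssT c | ssE M radM].
  by apply: semisimple_corner ssT; [exact: ga_mul | exact: ga_add | exact: ga_one | |].
apply: (eq0_from_blocks (sum_dualidem F r x)) => a b.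
have [<-|ab] := eqVneq a b; last exact: offdiag0.
apply: (ssE a); apply: rad_corner radM => //; exact: ga_mul.
Qed.
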